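(* Let $k$ be an odd integer with $k\ge 5$, let $D$ be a strong $k$-quasi-transitive digraph with $\mathrm{diam}(D)\ge k+2$, let $u,v\in V(D)$ with $d(u,v)=k+2$, and let $P$ be a shortest $(u,v)$-path. If $D[V(P)]$ is a semicomplete digraph, then $D[V(D)\setminus V(P)]$ is a semicomplete digraph.
   Context: All digraphs are finite, without loops or multiple arcs (opposite arcs allowed). Vertices $x,y$ are adjacent if $xy$ or $yx$ is an arc. For $k\ge 2$, $D$ is $k$-quasi-transitive if for every path $x_0x_1\ldots x_k$ of length $k$, $x_0$ and $x_k$ are adjacent. $d(x,y)$ is the length of a shortest $(x,y)$-path, $\mathrm{diam}(D)=\max_{x,y}d(x,y)$. $D[S]$ is the induced subdigraph; a semicomplete digraph is one in which every two distinct vertices are adjacent. *)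

From mathcomp Require Import all_boot.
Set Implicit Arguments. Unset Strict Implicit. Unset Printing Implicit Defensive.

(* A digraph on a finite vertex type T is an arc relation e : rel T
   (e x y <-> xy is an arc); loops are excluded by the hypothesis irreflexive e.
   Opposite arcs are allowed; multiple arcs are impossible by construction. *)

Definition adjacent (T : finType) (e : rel T) (x y : T) : bool := e x y || e y x.

(* A (directed) path x :: p : consecutive arcs and pairwise distinct vertices.
   Its length is size p, it starts at x and ends at last x p. *)
Definition dpath (T : finType) (e : rel T) (x : T) (p : seq T) : bool :=
  path e x p && uniq (x :: p).

Definition xy_path (T : finType) (e : rel T) (x y : T) (p : seq T) : bool :=
  dpath e x p && (last x p == y).

Definition k_quasi_transitive (T : finType) (e : rel T) (k : nat) : Prop :=
  forall (x : T) (p : seq T), dpath e x p -> size p = k -> adjacent e x (last x p).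

Definition strong (T : finType) (e : rel T) : Prop :=
  forall x y : T, exists p, xy_path e x y p.

Definition dist_is (T : finType) (e : rel T) (x y : T) (n : nat) : Prop :=
  (exists p, xy_path e x y p /\ size p = n) /\
  (forall p, xy_path e x y p -> n <= size p).

Definition diam_ge (T : finType) (e : rel T) (m : nat) : Prop :=
  exists x y n, dist_is e x y n /\ m <= n.

Definition shortest_path (T : finType) (e : rel T) (x y : T) (p : seq T) : Prop :=
  xy_path e x y p /\ (forall q, xy_path e x y q -> size p <= size q).

Definition semicomplete_on (T : finType) (e : rel T) (S : pred T) : Prop :=
  forall x y : T, x \in S -> y \in S -> x != y -> adjacent e x y.

(** Write P = x_0 ... x_n (n = k + 2) for the shortest path. As P is shortest and
    D[V(P)] is semicomplete, x_j -> x_i whenever j >= i + 2, so P contains paths of all the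
    lengths needed between prescribed positions, made of forward steps and backward jumps.
    Closing such a path with arcs to or from outside vertices gives a path of length
    k = n - 2, whose ends must be adjacent.

    Every outside vertex is adjacent to P (induction on its distance from P, finite as D
    is strong), and an outside vertex receiving no arc from P dominates all of P. For two
    outside vertices w, z: if no arc of P enters w but one enters z, a path of length
    n - 4 in P closes a (w,z)-path of length n - 2; if both receive and send arcs, the
    extreme positions of their in- and out-neighbours on P are forced into an impossible
    configuration; if neither receives an arc, a shortest path from P to the one nearer
    to P, preceded by n - 2 steps inside P, carries the domination of P by w and z
    forward until z dominates the vertex n - 3 steps before w. The cases without arcs
    leaving w or z are these arguments in the reverse digraph. *)

From Pilot Require Import Defs.
From mathcomp Require Import all_boot zify.
From Stdlib Require Import Classical Wf_nat.
Set Implicit Arguments. Unset Strict Implicit. Unset Printing Implicit Defensive.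

(* [lia] on the arithmetic hypotheses only: the boolean arc facts in context make it
   very slow otherwise. *)
Ltac nat_lia :=
  repeat match goal with
  | H : ?P |- _ =>
      lazymatch P with
      | is_true (_ <= _) => fail
      | is_true (_ && _) => fail
      | @eq nat _ _ => fail
      | nat => fail
      | _ => clear H
      end
  end; lia.

(** * Simple paths *)

Section SimplePaths.

Variable T : eqType.
Implicit Types (r : rel T) (a b y : T) (q : seq T).

(* [dpath] of Defs over an arbitrary eqType; the two are convertible. *)
Definition spath r a q := path r a q && uniq (a :: q).

(* The vertices at positions i+1 .. j of [a :: q], so that
   [nth a (a :: q) i :: subpath a q i j] is its segment between positions i and j. *)
Definition subpath a q i j := take (j - i) (drop i.+1 (a :: q)).

Lemma spath_cat r a q1 q2 :
  spath r a q1 -> spath r (last a q1) q2 ->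
  (forall y, y \in a :: q1 -> y \in q2 -> False) -> spath r a (q1 ++ q2).
Proof.
move=> /andP[p1 u1] /andP[p2 u2] dis; apply/andP; split.
  by rewrite cat_path p1 p2.
rewrite -cat_cons cat_uniq u1 /=; apply/andP; split; last by case/andP: u2.
by apply/hasPn => y y2; apply/negP => y1; apply: (dis y).
Qed.

Lemma spath_cons r a b q : spath r b q -> r a b -> a \notin b :: q -> spath r a (b :: q).
Proof. by move=> /andP[pb ub] rab abq; rewrite /spath /= rab pb abq. Qed.
Lemma spath_cat_cons r a q1 b q2 :
  spath r a q1 -> spath r b q2 -> r (last a q1) b ->
  (forall y, y \in a :: q1 -> y \in b :: q2 -> False) -> spath r a (q1 ++ b :: q2).
Proof.
move=> d1 d2 rab dis; apply: spath_cat => //.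
by apply: spath_cons => //; apply/negP; apply: dis; apply: mem_last.
Qed.

Lemma spath_rcons r a q b :
  spath r a q -> r (last a q) b -> b \notin a :: q -> spath r a (q ++ [:: b]).
Proof.
move=> /andP[pa ua] rab baq.
by rewrite /spath cats1 rcons_path pa rab -rcons_cons rcons_uniq baq ua.
Qed.

Lemma spath_rev r a q :
  spath r a q ->
  [/\ spath [rel u v | r v u] (last a q) (rev (belast a q)),
      last (last a q) (rev (belast a q)) = a & size (rev (belast a q)) = size q].
Proof.
move=> /andP[p u]; split; last by rewrite size_rev size_belast.
- by rewrite /spath rev_path p -rev_rcons -lastI rev_uniq.
- by case/lastP: q {p u} => //= q b; rewrite belast_rcons last_rcons rev_cons last_rcons.
Qed.

Lemma spath_step r a q i : spath r a q -> i < size q -> r (nth a (a :: q) i) (nth a (a :: q) i.+1).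
Proof. by case/andP=> /(pathP a) h _ /h. Qed.

Lemma spath_nth_inj r a q i j :
  spath r a q -> i <= size q -> j <= size q -> nth a (a :: q) i = nth a (a :: q) j -> i = j.
Proof. by case/andP=> _ u hi hj /eqP; rewrite nth_uniq // => /eqP. Qed.

Lemma subpath_cons a q i j : i <= size q ->
  nth a (a :: q) i :: subpath a q i j = take (j - i).+1 (drop i (a :: q)).
Proof. by move=> hi; rewrite (drop_nth a) //. Qed.

Lemma size_subpath a q i j : j <= size q -> size (subpath a q i j) = j - i.
Proof. by move=> hj; rewrite size_take size_drop /=; case: ifP => //; lia. Qed.

Lemma last_subpath a q i j : i <= j -> j <= size q ->
  last (nth a (a :: q) i) (subpath a q i j) = nth a (a :: q) j.
Proof.
move=> hij hj; rewrite (last_nth a) size_subpath // subpath_cons; last lia.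
by rewrite nth_take // nth_drop; congr nth; lia.
Qed.

Lemma mem_subpath a q i j y : i <= j -> j <= size q ->
  y \in nth a (a :: q) i :: subpath a q i j ->
  exists2 t, i <= t <= j & y = nth a (a :: q) t.
Proof.
move=> hij hj; rewrite subpath_cons; last lia.
move/(nthP a) => [t]; rewrite size_take size_drop /= => ht <-.
exists (i + t); first by move: ht; case: ifP; lia.
by rewrite nth_take ?nth_drop //; move: ht; case: ifP; lia.
Qed.

Lemma last_take_nth a q i : i <= size q -> last a (take i q) = nth a (a :: q) i.
Proof.
move=> hi; rewrite (last_nth a) size_take; case: ltnP => hi'.
  by case: i hi hi' => //= i _ hi'; rewrite nth_take.
by rewrite take_oversize // (_ : i = size q) //; lia.
Qed.

Lemma spath_subpath r a q i j : spath r a q -> i <= j -> j <= size q ->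
  spath r (nth a (a :: q) i) (subpath a q i j).
Proof.
move=> /andP[p u] hij hj; apply/andP; split.
  have : path r (last a (take i q)) (drop i q).
    by move: p; rewrite -{1}[q](cat_take_drop i) cat_path => /andP[].
  rewrite last_take_nth; last lia.
  exact: take_path.
by rewrite subpath_cons; [rewrite take_uniq ?drop_uniq | lia].
Qed.

Lemma notin_subpath a q i j y : i <= j -> j <= size q ->
  (forall t, i <= t <= j -> nth a (a :: q) t != y) -> y \notin nth a (a :: q) i :: subpath a q i j.
Proof.
move=> hij hj hneq; apply/negP => /(mem_subpath hij hj) [t ht hy].
by move: (hneq t ht); rewrite hy eqxx.
Qed.

Lemma nth_cons_cat y0 a s q i : last y0 s = a -> size s <= i <= size s + size q ->
  nth y0 (y0 :: s ++ q) i = nth a (a :: q) (i - size s).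
Proof.
move=> hl /andP[hi1 hi2]; rewrite -cat_cons lastI cat_rcons hl nth_cat size_belast ltnNge hi1 /=.
by apply: set_nth_default; rewrite /= ltnS leq_subLR.
Qed.

End SimplePaths.

Lemma spath_map (T U : eqType) (r : rel T) (r' : rel U) (f : T -> U) (a : T) q :
  {in a :: q &, injective f} ->
  {in a :: q &, forall i j, r i j -> r' (f i) (f j)} ->
  spath r a q -> spath r' (f a) (map f q).
Proof.
move=> inj hr /andP[p u]; apply/andP; split.
  rewrite path_map; apply: (sub_in_path (P := mem (a :: q)) (e := r)) => //.
  by apply/allP.
by rewrite (map_inj_in_uniq (s := a :: q) inj).
Qed.

(** * Paths along a semicomplete geodesic *)

(* The steps between positions of the geodesic that are arcs of D (see backward_arc). *)
Definition jump (i j : nat) := (j == i.+1) || (j.+2 <= i).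

Definition jpath n a l := spath jump a l && all (fun t => t <= n) (a :: l).

Lemma last_iota a m : last a (iota a.+1 m) = a + m.
Proof. by elim: m a => [|m IH] a /=; rewrite ?addn0 ?IH ?addSnnS. Qed.

Lemma mem_iota_cons a m y : y \in a :: iota a.+1 m -> a <= y <= a + m.
Proof. by rewrite -/(iota a m.+1) mem_iota; lia. Qed.

Lemma jpath_iota n a m : a + m <= n -> jpath n a (iota a.+1 m).
Proof.
move=> h; apply/andP; split; last by apply/allP => t /mem_iota_cons; lia.
apply/andP; split; last exact: (iota_uniq a m.+1).
by elim: m a {h} => //= m IH a; rewrite /jump eqxx IH.
Qed.

Lemma jpath_cat n a l1 b l2 : jpath n a l1 -> jpath n b l2 -> jump (last a l1) b ->
  (forall y, y \in a :: l1 -> y \in b :: l2 -> False) -> jpath n a (l1 ++ b :: l2).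
Proof.
move=> /andP[d1 a1] /andP[d2 a2] hs hdis; apply/andP; split.
  exact: spath_cat_cons.
by move: a1 a2; rewrite /= all_cat /= => /andP[-> ->] /andP[-> ->].
Qed.

Lemma jpath_mem n a l y : jpath n a l -> y \in a :: l -> y <= n.
Proof. by case/andP=> _ /allP h /h. Qed.

Lemma jpath_ending n b L : 2 <= n -> b <= n -> L <= n ->
  exists a l, [/\ jpath n a l, last a l = b & size l = L].
Proof.
move=> hn hb hL; case: (leqP L b) => hLb.
  exists (b - L), (iota (b - L).+1 L); rewrite last_iota size_iota.
  by split=> //; [apply: jpath_iota | ]; lia.
exists (n - (L - 1 - b)), (iota (n - (L - 1 - b)).+1 (L - 1 - b) ++ 0 :: iota 1 b); split.
- apply: jpath_cat; try (apply: jpath_iota; lia).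
    by rewrite last_iota /jump; apply/orP; right; lia.
  by move=> y /mem_iota_cons h1 /mem_iota_cons h2; lia.
- by rewrite last_cat /= last_iota.
- by rewrite size_cat /= !size_iota; lia.
Qed.

Lemma jpath_starting n a L : 2 <= n -> a <= n -> L <= n -> exists l, jpath n a l /\ size l = L.
Proof.
move=> hn ha hL; case: (leqP (a + L) n) => haL.
  by exists (iota a.+1 L); rewrite size_iota; split => //; apply: jpath_iota.
exists (iota a.+1 (n - a) ++ 0 :: iota 1 (L - (n - a) - 1)); split.
- apply: jpath_cat; try (apply: jpath_iota; lia).
    by rewrite last_iota /jump; apply/orP; right; lia.
  by move=> y /mem_iota_cons h1 /mem_iota_cons h2; lia.
- by rewrite size_cat /= !size_iota; lia.
Qed.

Lemma jpath_down n a b L : 7 <= n -> b < a -> a <= n -> n <= L + 4 -> L + 3 <= n ->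
  exists l, [/\ jpath n a l, last a l = b & size l = L].
Proof.
move=> hn hba ha hL1 hL2.
have disj c m c' m' : c + m < c' \/ c' + m' < c -> forall y,
    y \in c :: iota c.+1 m -> y \in c' :: iota c'.+1 m' -> False.
  by move=> h y /mem_iota_cons h1 /mem_iota_cons h2; lia.
case: (leqP (a - b) (n + 1 - L)) => hreg; last first.
  pose c := minn (n + 1 + b - L) (n - 2); pose c' := n + 1 + b - L - c.
  exists (iota a.+1 (n - a) ++ c :: iota c.+1 (a - 1 - c) ++ c' :: iota c'.+1 (b - c')).
  rewrite last_cat /= last_cat /= last_iota size_cat /= size_cat /= !size_iota /c' /c.
  split; try lia.
  apply: jpath_cat; rewrite ?last_iota; try (apply: jpath_iota; lia).
  - apply: jpath_cat; rewrite ?last_iota; try (apply: jpath_iota; lia).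
      by apply/orP; right; lia.
    by apply: disj; lia.
  - by apply/orP; right; lia.
  - move=> y h1; rewrite -cat_cons mem_cat => /orP[] h2; apply: (disj _ _ _ _ _ y h1 h2); lia.
case: (leqP (a + L - 1) n) => hm.
  exists (iota a.+1 (L - 1) ++ b :: iota b.+1 0); rewrite last_cat size_cat size_iota.
  split; try (simpl; lia).
  apply: jpath_cat; rewrite ?last_iota; try (apply: jpath_iota; lia).
    by apply/orP; right; lia.
  by apply: disj; lia.
pose c := b + (n - a) + 1 - L.
exists (iota a.+1 (n - a) ++ c :: iota c.+1 (b - c)).
rewrite last_cat /= last_iota size_cat size_iota /= size_iota /c; split; try lia.
apply: jpath_cat; rewrite ?last_iota; try (apply: jpath_iota; lia).
  by apply/orP; right; lia.
by apply: disj; lia.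
Qed.

Definition trace (T : Type) n (x : nat -> T) := [seq x i | i <- iota 0 n.+1].

Lemma mem_trace (T : eqType) n (x : nat -> T) i : i <= n -> x i \in trace n x.
Proof. by move=> h; apply: map_f; rewrite mem_iota; lia. Qed.

Lemma traceP (T : eqType) n (x : nat -> T) y : y \in trace n x -> exists2 i, i <= n & y = x i.
Proof. by case/mapP=> i; rewrite mem_iota => hi ->; exists i => //; lia. Qed.

Lemma trace_rev (T : eqType) n (x : nat -> T) y :
  (y \in trace n (fun i => x (n - i))) = (y \in trace n x).
Proof.
apply/mapP/mapP => -[i]; rewrite mem_iota => hi ->.
  by exists (n - i); rewrite // mem_iota; lia.
by exists (n - i); rewrite ?mem_iota; [lia | congr x; lia].
Qed.

Lemma jpath_trace (T : eqType) n (x : nat -> T) a l y :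
  jpath n a l -> y \in x a :: map x l -> y \in trace n x.
Proof. by move=> hl; rewrite -map_cons => /mapP[t ht ->]; apply/mem_trace/(jpath_mem hl). Qed.

Lemma jpath_notin (T : eqType) n (x : nat -> T) a l w :
  jpath n a l -> w \notin trace n x -> w \notin x a :: map x l.
Proof. by move=> hl; apply: contra; apply: jpath_trace hl. Qed.

Lemma adjacentC (T : finType) (e : rel T) a b : adjacent e a b = adjacent e b a.
Proof. by rewrite /adjacent orbC. Qed.

Lemma adjacent_rev (T : finType) (e : rel T) a b : adjacent [rel u v | e v u] a b = adjacent e a b.
Proof. exact: adjacentC. Qed.

Lemma adjacent_orient (T : finType) (e : rel T) a b : adjacent e a b -> ~~ e b a -> e a b.
Proof. by case/orP=> // ->. Qed.

(* In the theorem n = k + 2 and x i is the i-th vertex of the shortest path. *)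
Record geodesic_setting (T : finType) (e : rel T) (n : nat) (x : nat -> T) : Prop := {
  geo_long : 7 <= n;
  geo_inj : forall i j, i <= n -> j <= n -> x i = x j -> i = j;
  geo_arc : forall i, i < n -> e (x i) (x i.+1);
  geo_semicomplete : forall i j, i <= n -> j <= n -> i != j -> adjacent e (x i) (x j);
  geo_shortest : forall q, spath e (x 0) q -> last (x 0) q = x n -> n <= size q;
  geo_kqt : forall a q, spath e a q -> size q = n - 2 -> adjacent e a (last a q);
  geo_strong : forall a b, exists2 q, spath e a q & last a q = b
}.

Lemma geodesic_setting_rev (T : finType) (e : rel T) n x :
  geodesic_setting e n x -> geodesic_setting [rel u v | e v u] n (fun i => x (n - i)).
Proof.
case=> hn hinj harc hsc hshort hkqt hstrong; split => //.
- by move=> i j hi hj /hinj h; have := h (leq_subr _ _) (leq_subr _ _); lia.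
- by move=> i hi /=; rewrite (_ : n - i = (n - i.+1).+1); [apply: harc|]; lia.
- by move=> i j hi hj hij; rewrite adjacent_rev adjacentC; apply: hsc; lia.
- move=> q hq hl; have [hq' hl' <-] := spath_rev hq.
  rewrite hl subnn in hq' hl'; apply: hshort hq' _.
  by rewrite hl' subn0.
- move=> a q hq hs; have [hq' hl' hs'] := spath_rev hq.
  by rewrite adjacent_rev adjacentC -{2}hl'; apply: hkqt; rewrite ?hs'.
- move=> a b; have [q hq hl] := hstrong b a; have [hq' hl' _] := spath_rev hq.
  by exists (rev (belast b q)); rewrite -hl.
Qed.

(** * Neighbours of the geodesic *)

Section GeodesicNeighbours.

Variables (T : finType) (e : rel T) (n : nat) (x : nat -> T).
Hypothesis G : geodesic_setting e n x.
Local Notation outside w := (w \notin trace n x).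

Lemma spath_indices (r : rel nat) a l :
  (forall i j, i <= n -> j <= n -> r i j -> e (x i) (x j)) ->
  all (fun i => i <= n) (a :: l) -> spath r a l -> spath e (x a) (map x l).
Proof.
move=> hr /allP hall; apply: spath_map => i j /hall hi /hall hj.
  exact: (geo_inj G).
exact: hr.
Qed.

Lemma backward_arc i j : i.+2 <= j -> j <= n -> e (x j) (x i).
Proof.
move=> hij hj; apply: adjacent_orient; first by rewrite adjacentC; apply: (geo_semicomplete G); lia.
apply/negP => hx.
pose r a b := (b == a.+1) || (a == i) && (b == j).
have hr : spath r 0 (iota 1 i ++ j :: iota j.+1 (n - j)).
  have hiota a m : spath r a (iota a.+1 m).
    by apply/andP; split; [elim: m a => //= m IH a; rewrite /r eqxx IH | exact: (iota_uniq a m.+1)].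
  apply: spath_cat_cons => //; first by rewrite last_iota /r !eqxx orbT.
  by move=> y /mem_iota_cons h1 /mem_iota_cons h2; lia.
have hall : all (fun t => t <= n) (0 :: iota 1 i ++ j :: iota j.+1 (n - j)).
  by rewrite /= all_cat /= hj; apply/andP; split; apply/allP => t; rewrite mem_iota; lia.
have he a b : a <= n -> b <= n -> r a b -> e (x a) (x b).
  by move=> ha hb /orP[/eqP hab | /andP[/eqP -> /eqP ->]] //; subst b; apply: (geo_arc G).
have := geo_shortest G (spath_indices he hall hr).
rewrite size_map size_cat /= !size_iota last_map last_cat /= last_iota subnKC //.
by move=> /(_ erefl); lia.
Qed.

Lemma spath_jpath a l : jpath n a l -> spath e (x a) (map x l).
Proof.
case/andP=> hl hall; apply: spath_indices hall hl => i j hi hj /orP[/eqP hij | hji].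
  by subst j; apply: (geo_arc G).
exact: backward_arc.
Qed.

Lemma adj_path_end w a p :
  spath e a p -> size p = n - 3 -> e w a -> w \notin a :: p -> adjacent e w (last a p).
Proof.
move=> hp hs hwa hwp; apply: (geo_kqt G (q := a :: p)); first exact: spath_cons.
by rewrite /= hs; have := geo_long G; lia.
Qed.

Lemma adj_across_path w z a p :
  spath e a p -> size p = n - 4 -> e w a -> e (last a p) z ->
  w \notin a :: p -> z \notin a :: p -> w != z -> adjacent e w z.
Proof.
move=> hp hs hwa hpz hwp hzp hwz.
have -> : z = last w (a :: p ++ [:: z]) by rewrite /= last_cat.
apply: (geo_kqt G); last by rewrite /= size_cat hs /=; have := geo_long G; lia.
apply: spath_cons hwa _; first exact: spath_rcons.
by rewrite -cat_cons mem_cat negb_or hwp mem_seq1.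
Qed.

Lemma adj_jpath_end w a l :
  outside w -> e w (x a) -> jpath n a l -> size l = n - 3 -> adjacent e w (x (last a l)).
Proof.
move=> hw hwa hl hs; rewrite -last_map.
by apply: adj_path_end (spath_jpath hl) _ hwa (jpath_notin hl hw); rewrite size_map.
Qed.

Lemma adj_across_jpath w z a l :
  outside w -> outside z -> w != z -> e w (x a) -> e (x (last a l)) z ->
  jpath n a l -> size l = n - 4 -> adjacent e w z.
Proof.
move=> hw hz hwz hwa hlz hl hs.
apply: adj_across_path (spath_jpath hl) _ hwa _ (jpath_notin hl hw) (jpath_notin hl hz) hwz.
  by rewrite size_map.
by rewrite last_map.
Qed.

Lemma adj_out_below w a t : outside w -> e w (x a) -> t < a -> a <= n -> adjacent e w (x t).
Proof.
move=> hw hwa hta ha; have hn := geo_long G.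
have [l [hl <- hs]] := jpath_down (L := n - 3) hn hta ha ltac:(lia) ltac:(lia).
exact: adj_jpath_end.
Qed.

Lemma adj_out_shift w a : outside w -> e w (x a) -> a <= 3 -> adjacent e w (x (a + (n - 3))).
Proof.
move=> hw hwa ha; rewrite -(last_iota a (n - 3)).
by apply: adj_jpath_end; rewrite ?size_iota //; apply: jpath_iota; have := geo_long G; lia.
Qed.

Lemma adj_out_in_cross w z a b :
  outside w -> outside z -> w != z -> e w (x a) -> e (x b) z -> b < a -> a <= n ->
  adjacent e w z.
Proof.
move=> hw hz hwz hwa hbz hba ha; have hn := geo_long G.
have [l [hl hlb hs]] := jpath_down (L := n - 4) hn hba ha ltac:(lia) ltac:(lia).
by apply: (adj_across_jpath hw hz hwz hwa _ hl hs); rewrite hlb.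
Qed.

Lemma adj_out_in_shift w z a :
  outside w -> outside z -> w != z -> e w (x a) -> e (x (a + (n - 4))) z -> a <= 4 ->
  adjacent e w z.
Proof.
move=> hw hz hwz hwa hbz ha.
apply: (adj_across_jpath hw hz hwz hwa _ (jpath_iota _) (size_iota _ _)).
  by rewrite last_iota.
by have := geo_long G; lia.
Qed.

Lemma in_out_gap w i j : outside w -> i <= n -> j <= n -> e (x j) w -> e w (x i) -> i <= j.+2.
Proof.
move=> hw hi hj hjw hwi; rewrite leqNgt; apply/negP => hij.
have hl1 : jpath n 0 (iota 1 j) by apply: jpath_iota; lia.
have hl2 : jpath n i (iota i.+1 (n - i)) by apply: jpath_iota; lia.
have hp : spath e (x 0) (map x (iota 1 j) ++ w :: x i :: map x (iota i.+1 (n - i))).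
  apply: spath_cat_cons (spath_jpath hl1) _ _ _.
  - exact: spath_cons (spath_jpath hl2) hwi (jpath_notin hl2 hw).
  - by rewrite last_map last_iota.
  move=> y hy1; rewrite inE => /orP[/eqP hyw | ].
    by move: hw; rewrite -hyw (jpath_trace hl1 hy1).
  move: hy1; rewrite -!map_cons => /mapP[t1 /mem_iota_cons ht1 ->] /mapP[t2 /mem_iota_cons ht2].
  by move/(geo_inj G); lia.
have := geo_shortest G hp.
rewrite last_cat /= last_map last_iota size_cat /= !size_map !size_iota subnKC //.
by move=> /(_ erefl); lia.
Qed.

Definition trace_path y m :=
  exists a q, [/\ spath e a q, a \in trace n x, last a q = y & size q = m].

Definition trace_geodesic a q :=
  [/\ spath e a q, a \in trace n x & forall m, trace_path (last a q) m -> size q <= m].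

Lemma trace_geodesic_exists y : exists a q, trace_geodesic a q /\ last a q = y.
Proof.
have [q0 hq0 hl0] := geo_strong G (x 0) y.
have hex : exists m, trace_path y m.
  by exists (size q0), (x 0), q0; split => //; apply: mem_trace.
have [d [[[a [q [hq ha hl hs]]] hmin] _]] :=
  dec_inh_nat_subset_has_unique_least_element _ (fun m => classic _) hex.
by exists a, q; split => //; split => // m; rewrite hl hs => /hmin /leP.
Qed.

Lemma trace_path_prefix a q i : spath e a q -> a \in trace n x -> i <= size q ->
  trace_path (nth a (a :: q) i) i.
Proof.
move=> hq ha hi; exists a, (subpath a q 0 i); split => //.
- exact: (spath_subpath hq (leq0n i) hi).
- exact: (last_subpath a (leq0n i) hi).
- by rewrite size_subpath ?subn0.
Qed.

Lemma trace_path_suffix a q i : spath e a q -> i <= size q ->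
  nth a (a :: q) i \in trace n x -> trace_path (last a q) (size q - i).
Proof.
move=> hq hi hin; exists (nth a (a :: q) i), (subpath a q i (size q)).
by rewrite spath_subpath ?last_subpath ?size_subpath // (last_nth a).
Qed.

Lemma trace_geodesic_outside a q u : trace_geodesic a q -> u \in q -> outside u.
Proof.
case=> hq ha hmin /(nthP a) [t ht <-]; apply/negP => hin.
by have := hmin _ (trace_path_suffix (i := t.+1) hq ht hin); lia.
Qed.

Lemma trace_geodesic_no_shortcut a q i :
  trace_geodesic a q -> i.+1 < size q -> ~~ e (nth a (a :: q) i) (last a q).
Proof.
case=> hq ha hmin hi; apply/negP => hiy.
suff : trace_path (last a q) i.+1 by move/hmin; lia.
exists a, (subpath a q 0 i ++ [:: last a q]).
rewrite last_cat size_cat size_subpath ?addn1; last lia.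
split => //; last by rewrite subn0.
apply: (spath_rcons (q := subpath a q 0 i)).
- exact: (spath_subpath hq (leq0n i) (ltnW (ltnW hi))).
- by rewrite (last_subpath a (leq0n i)) //; lia.
- apply/negP => /(mem_subpath (leq0n i) (ltnW (ltnW hi))) [t ht].
  by rewrite (last_nth a) => /(spath_nth_inj hq); lia.
Qed.

Lemma trace_geodesic_no_entry a q c i :
  trace_geodesic a q -> c <= n -> 1 < i <= size q -> ~~ e (x c) (nth a (a :: q) i).
Proof.
move=> hg hc /andP[hi1 hi]; have [hq ha hmin] := hg; apply/negP => hci.
suff : trace_path (last a q) (size q - i).+1 by move/hmin; lia.
exists (x c), (nth a (a :: q) i :: subpath a q i (size q)); split.
- apply: spath_cons hci _; first exact: spath_subpath.
  apply/negP => /(mem_subpath hi (leqnn _)) [t ht hct].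
  have : nth a (a :: q) t \in q by case: t ht {hct} => [|t] ht; [lia | apply: mem_nth; lia].
  by move/(trace_geodesic_outside hg); rewrite -hct mem_trace.
- exact: mem_trace.
- by rewrite /= (last_subpath a hi (leqnn _)) (last_nth a).
- by rewrite /= size_subpath.
Qed.

Lemma adj_trace_near a q : trace_geodesic a q -> size q <= n - 2 ->
  exists2 i, i <= n & adjacent e (last a q) (x i).
Proof.
move=> hg hd; have [hq ha _] := hg; have [b hb hab] := traceP ha; have hn := geo_long G.
have [a0 [l0 [hl0 hlast hs0]]] := jpath_ending (n := n) (L := n - 2 - size q) ltac:(lia) hb ltac:(lia).
have hp : spath e (x a0) (map x l0 ++ q).
  apply: spath_cat (spath_jpath hl0) _ _; first by rewrite last_map hlast -hab.
  move=> u /(jpath_trace hl0) hu /(trace_geodesic_outside hg).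
  by rewrite hu.
exists a0; first exact: (jpath_mem hl0 (mem_head _ _)).
have -> : last a q = last (x a0) (map x l0 ++ q) by rewrite last_cat last_map hlast hab.
rewrite adjacentC.
by apply: (geo_kqt G hp); rewrite size_cat size_map hs0; lia.
Qed.

(* y -> v_t -> v_(t+1) -> x c, followed by n - 5 steps in P, has length n - 2; the
   minimality of q orients its first three arcs. *)
Lemma adj_trace_far a q t c :
  trace_geodesic a q -> size q = t + (n - 2) -> 0 < t -> c <= n ->
  adjacent e (nth a (a :: q) t.+1) (x c) ->
  exists2 i, i <= n & adjacent e (last a q) (x i).
Proof.
move=> hg hsq ht hc; have [hq ha hmin] := hg; have hn := geo_long G.
have [htq ht1q] : t < size q /\ t.+1 < size q by split; lia.
pose vt := nth a (a :: q) t; pose v1 := nth a (a :: q) t.+1; move=> hv1c.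
have hy : last a q = nth a (a :: q) (size q) by rewrite (last_nth a).
have out i : 0 < i <= size q -> nth a (a :: q) i \notin trace n x.
  by case: i => // i hi; apply/(trace_geodesic_outside hg)/mem_nth.
have neq i j : i <= size q -> j <= size q -> i != j -> nth a (a :: q) i != nth a (a :: q) j.
  by move=> hi hj; apply: contra => /eqP /(spath_nth_inj hq hi hj) ->.
have hyvt : e (last a q) vt.
  apply: adjacent_orient; last exact: trace_geodesic_no_shortcut hg ht1q.
  have hp := spath_subpath hq (ltnW htq) (leqnn _).
  rewrite adjacentC hy -(last_subpath a (ltnW htq) (leqnn _)).
  by apply: (geo_kqt G hp); rewrite size_subpath // hsq addKn.
have hvt1 : e vt v1 := spath_step hq htq.
have {}hv1c : e v1 (x c).
  by apply: adjacent_orient hv1c _; apply: trace_geodesic_no_entry hg hc _; rewrite ltnS ht.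
have [l [hl hsl]] := jpath_starting (n := n) (L := n - 5) ltac:(lia) hc (leq_subr _ _).
have hyt : last a q != vt by rewrite hy neq // ?(ltnW htq) // neq_ltn htq orbT.
have hy1 : last a q != v1 by rewrite hy neq // ?(ltnW ht1q) // neq_ltn ht1q orbT.
have ht1 : vt != v1 by rewrite neq ?(ltnW htq) // neq_ltn ltnSn.
have hoy : outside (last a q) by rewrite hy out // leqnn andbT (leq_ltn_trans (leq0n t) htq).
have hot : outside vt by rewrite out // ht (ltnW htq).
have ho1 : outside v1 by rewrite out // (ltnW ht1q).
have hp : spath e (last a q) (vt :: v1 :: x c :: map x l).
  apply: spath_cons hyvt _; last by rewrite inE negb_or hyt inE negb_or hy1 (jpath_notin hl).
  apply: spath_cons hvt1 _; last by rewrite inE negb_or ht1 (jpath_notin hl hot).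
  exact: spath_cons (spath_jpath hl) hv1c (jpath_notin hl ho1).
exists (last c l); first exact: (jpath_mem hl (mem_last _ _)).
have hs : size (vt :: v1 :: x c :: map x l) = n - 2 by rewrite /= size_map hsl; nat_lia.
by have := geo_kqt G hp hs; rewrite /= last_map.
Qed.

Lemma adj_trace y : exists2 i, i <= n & adjacent e y (x i).
Proof.
suff ind d a q : trace_geodesic a q -> size q <= d ->
    exists2 i, i <= n & adjacent e (last a q) (x i).
  by have [a [q [hg <-]]] := trace_geodesic_exists y; apply: ind hg (leqnn _).
have hn := geo_long G.
elim: d a q => [|d IH] a q hg hd; first by apply: adj_trace_near hg _; lia.
case: (leqP (size q) (n - 2)) => hnear; first exact: adj_trace_near.
have [t hsq] : exists t, size q = t + (n - 2) by exists (size q - (n - 2)); lia.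
have [a' [q' [hg' hl']]] := trace_geodesic_exists (nth a (a :: q) t.+1).
have [hq ha _] := hg; have [_ _ hmin'] := hg'.
have hs' : size q' <= t.+1.
  by apply: hmin'; rewrite hl'; apply: trace_path_prefix hq ha _; lia.
have [c hc] := IH a' q' hg' ltac:(lia); rewrite hl' => hadj.
have ht : 0 < t by lia.
exact: adj_trace_far hg hsq ht hc hadj.
Qed.

Lemma out_to_all y : outside y -> (forall i, i <= n -> ~~ e (x i) y) ->
  forall i, i <= n -> e y (x i).
Proof.
move=> hy hin; have hn := geo_long G.
have below a t : t < a -> a <= n -> e y (x a) -> e y (x t).
  move=> hta ha hya; apply: adjacent_orient (hin t _); last lia.
  exact: adj_out_below hy hya hta ha.
have [s hs hadj] := adj_trace y.
have hys : e y (x s) by apply: adjacent_orient hadj (hin s hs).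
have hy0 : e y (x 0) by case: s hs hys {hadj} => // s hs; apply: below.
have hy3 : e y (x (n - 3)).
  by apply: adjacent_orient (hin _ (leq_subr _ _)); apply: adj_out_shift hy hy0 _.
have hyn : e y (x n).
  apply: adjacent_orient (hin _ (leqnn _)).
  by rewrite (_ : n = 3 + (n - 3)); [apply: adj_out_shift hy (below _ _ _ _ hy3) _ | ]; lia.
move=> i hi; case: (ltnP i n) => hin'; first exact: below hyn.
by rewrite (_ : i = n) //; lia.
Qed.

End GeodesicNeighbours.

Section ReversedGeodesic.

Variables (T : finType) (e : rel T) (n : nat) (x : nat -> T).
Hypothesis G : geodesic_setting e n x.
Local Notation outside w := (w \notin trace n x).
Let G' := geodesic_setting_rev G.

Lemma adj_in_above w j t : outside w -> e (x j) w -> j < t -> t <= n -> adjacent e w (x t).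
Proof.
move=> hw hjw hjt ht.
have := adj_out_below G' (w := w) (a := n - j) (t := n - t).
rewrite trace_rev adjacent_rev /= !subKn; try lia.
by move/(_ hw hjw); apply; lia.
Qed.

Lemma adj_in_shift w j : outside w -> e (x j) w -> n - 3 <= j <= n ->
  adjacent e w (x (j - (n - 3))).
Proof.
move=> hw hjw /andP[hj1 hj2].
have := adj_out_shift G' (w := w) (a := n - j).
rewrite trace_rev adjacent_rev /= subKn // (_ : n - (n - j + (n - 3)) = j - (n - 3)); last lia.
by move/(_ hw hjw); apply; lia.
Qed.

End ReversedGeodesic.

(** * Pairs of outside vertices *)

Lemma ex_bounded_or_none (P : pred nat) n :
  (exists2 i, i <= n & P i) \/ (forall i, i <= n -> ~~ P i).
Proof.
case: (boolP (has P (iota 0 n.+1))) => [/hasP [i hi hPi] | /hasPn h].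
  by left; exists i; rewrite // -ltnS; move: hi; rewrite mem_iota.
by right => i hi; apply: h; rewrite mem_iota.
Qed.

Lemma ex_max_bounded (P : pred nat) n : (exists2 a, a <= n & P a) ->
  exists A, [/\ A <= n, P A & forall a, a <= n -> P a -> a <= A].
Proof.
case=> a0 ha0 hPa0.
have hex : exists a, (a <= n) && P a by exists a0; rewrite ha0.
have hub a : (a <= n) && P a -> a <= n by case/andP.
have [A /andP[hA hPA] hmax] := ex_maxnP hex hub.
by exists A; split => // a ha hPa; apply: hmax; rewrite ha.
Qed.

Lemma ex_min_bounded (P : pred nat) n : (exists2 a, a <= n & P a) ->
  exists B, [/\ B <= n, P B & forall b, b <= n -> P b -> B <= b].
Proof.
case=> a0 ha0 hPa0.
have hex : exists a, (a <= n) && P a by exists a0; rewrite ha0.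
have [B /andP[hB hPB] hmin] := ex_minnP hex.
by exists B; split => // b hb hPb; apply: hmin; rewrite hb.
Qed.

Section OutsidePairs.

Variables (T : finType) (e : rel T) (n : nat) (x : nat -> T).
Hypothesis G : geodesic_setting e n x.
Local Notation outside w := (w \notin trace n x).

Lemma adj_of_no_in w z b : outside w -> outside z -> w != z ->
  (forall i, i <= n -> ~~ e (x i) w) -> b <= n -> e (x b) z -> adjacent e w z.
Proof.
move=> hw hz hwz hin hb hbz; have hn := geo_long G.
have [a [l [hl hlb hs]]] := jpath_ending (n := n) (L := n - 4) ltac:(lia) hb ltac:(lia).
apply: (adj_across_jpath G hw hz hwz _ _ hl hs); last by rewrite hlb.
exact: (out_to_all G hw hin (jpath_mem hl (mem_head _ _))).
Qed.

(* A and B are the last out-neighbour and the first in-neighbour position of w on P,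
   A' and B' those of z. The constraints force A = 3 and B = n - 3, and then neither
   orientation of the arc between z and x 1 is possible. *)
Section BothDirections.

Variables (w z : T) (A B A' B' : nat).
Hypotheses (hw : outside w) (hz : outside z) (hwz : w != z) (hwz_nadj : ~~ adjacent e w z).
Hypotheses (hA : A <= n) (hwA : e w (x A)) (hA_max : forall a, a <= n -> e w (x a) -> a <= A).
Hypotheses (hB : B <= n) (hBw : e (x B) w) (hB_min : forall b, b <= n -> e (x b) w -> B <= b).
Hypotheses (hA' : A' <= n) (hzA' : e z (x A')) (hA'_max : forall a, a <= n -> e z (x a) -> a <= A').
Hypotheses (hB' : B' <= n) (hB'z : e (x B') z) (hB'_min : forall b, b <= n -> e (x b) z -> B' <= b).
Hypothesis hAA' : A <= A'.

Let hzw : z != w. Proof. by rewrite eq_sym. Qed.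
Let hzw_nadj : ~~ adjacent e z w. Proof. by rewrite adjacentC. Qed.

Let out_w_le_in_z a b : a <= n -> e w (x a) -> e (x b) z -> a <= b.
Proof.
move=> ha hwa hbz; rewrite leqNgt; apply/negP => hba; move/negP: hwz_nadj; apply.
exact: (adj_out_in_cross G hw hz hwz hwa hbz hba ha).
Qed.

Let out_z_le_in_w a b : a <= n -> e z (x a) -> e (x b) w -> a <= b.
Proof.
move=> ha hza hbw; rewrite leqNgt; apply/negP => hba; move/negP: hzw_nadj; apply.
exact: (adj_out_in_cross G hz hw hzw hza hbw hba ha).
Qed.

Let no_shift_wz a : a <= 4 -> e w (x a) -> ~~ e (x (a + (n - 4))) z.
Proof. by move=> ha hwa; apply/negP => h; move/negP: hwz_nadj; apply; exact: (adj_out_in_shift G hw hz hwz hwa h ha). Qed.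

Let no_shift_zw a : a <= 4 -> e z (x a) -> ~~ e (x (a + (n - 4))) w.
Proof. by move=> ha hza; apply/negP => h; move/negP: hzw_nadj; apply; exact: (adj_out_in_shift G hz hw hzw hza h ha). Qed.

Let hAB : A <= B. Proof. exact: leq_trans hAA' (out_z_le_in_w hA' hzA' hBw). Qed.

Let w_out_prefix t : t <= A -> e w (x t).
Proof.
rewrite leq_eqVlt => /orP[/eqP -> // | htA].
apply: adjacent_orient (adj_out_below G hw hwA htA hA) _.
by apply/negP => /(hB_min (ltnW (leq_trans htA hA))); have := hAB; lia.
Qed.

Let w_in_suffix t : B <= t -> t <= n -> e (x t) w.
Proof.
move=> hBt ht; move: hBt; rewrite leq_eqVlt => /orP[/eqP <- // | hBt].
apply: adjacent_orient; first by rewrite adjacentC; exact: (adj_in_above G hw hBw hBt ht).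
by apply/negP => /(hA_max ht); have := hAB; lia.
Qed.

Let z_to_start : e z (x 0).
Proof.
have hn := geo_long G.
have hadj : adjacent e z (x 0).
  case: (posnP A') => [hA'0 | hA'pos]; first by rewrite /adjacent -hA'0 hzA'.
  exact: (adj_out_below G hz hzA' hA'pos hA').
apply: adjacent_orient hadj _; apply/negP => h0z.
have := adj_in_above G hz h0z (t := n - 4) ltac:(nat_lia) ltac:(nat_lia).
case/orP => [hz4 | h4z].
  by have := in_out_gap G hz (i := n - 4) (j := 0) ltac:(nat_lia) ltac:(nat_lia) h0z hz4; nat_lia.
by move/negP: (no_shift_wz (leq0n 4) (w_out_prefix (leq0n A))); rewrite add0n.
Qed.

Let end_to_z : e (x n) z.
Proof.
have hn := geo_long G.
have hadj : adjacent e (x n) z.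
  case: (ltnP B' n) => [hB'n | hnB']; last by rewrite /adjacent (_ : n = B') ?hB'z //; nat_lia.
  by rewrite adjacentC; exact: (adj_in_above G hz hB'z hB'n (leqnn n)).
apply: adjacent_orient hadj _; apply/negP => hzn.
have hnA' := hA'_max (leqnn n) hzn.
have hnw : e (x n) w by rewrite (_ : n = B) //; have := out_z_le_in_w hA' hzA' hBw; nat_lia.
have := in_out_gap G hz (leqnn n) hB' hB'z hzn => hgap.
case/orP: (adj_out_below G hz hzn (t := 4) ltac:(nat_lia) (leqnn n)) => [hz4 | h4z].
  by move/negP: (no_shift_zw (leqnn 4) hz4); rewrite (_ : 4 + (n - 4) = n) //; nat_lia.
by have := hB'_min (ltnW (leq_trans (isT : 4 < 7) hn)) h4z; nat_lia.
Qed.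

Let A_le3 : A <= 3.
Proof.
rewrite leqNgt; apply/negP => hA4; have hn := geo_long G.
move/negP: (no_shift_wz (leqnn 4) (w_out_prefix hA4)); apply.
by rewrite (_ : 4 + (n - 4) = n); [exact: end_to_z | nat_lia].
Qed.

Let B_le_n3 : B <= n - 3.
Proof.
have hn := geo_long G.
case/orP: (adj_out_shift G hw (w_out_prefix (leq0n A)) (isT : 0 <= 3)); rewrite add0n => h.
  by have := hA_max (leq_subr 3 n) h; have := A_le3; nat_lia.
exact: hB_min (leq_subr 3 n) h.
Qed.

Let B_ge_n3 : n - 3 <= B.
Proof.
rewrite leqNgt; apply/negP => hB4; have hn := geo_long G.
move/negP: (no_shift_zw (leq0n 4) z_to_start); apply; rewrite add0n.
by apply: w_in_suffix; nat_lia.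
Qed.

Let A_ge3 : 3 <= A.
Proof.
have hn := geo_long G; have h3n : 3 <= n by nat_lia.
have := adj_in_shift G hw (w_in_suffix hB (leqnn n)) ltac:(nat_lia).
rewrite (_ : n - (n - 3) = 3); last nat_lia.
case/orP => h; first exact: hA_max h3n h.
by have := hB_min h3n h; have := B_ge_n3; nat_lia.
Qed.

Lemma both_directions_absurd : False.
Proof.
have hn := geo_long G.
have hA'1 : 1 < A' by have := A_ge3; nat_lia.
case/orP: (adj_out_below G hz hzA' hA'1 hA') => h.
  move/negP: (no_shift_zw (isT : 1 <= 4) h); apply.
  by apply: w_in_suffix; have := B_le_n3; nat_lia.
have := hB'_min (ltnW (leq_trans hA'1 hA')) h; have := out_w_le_in_z hA hwA hB'z.
by have := A_ge3; nat_lia.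
Qed.

End BothDirections.

Lemma adj_of_two_way w z : outside w -> outside z -> w != z ->
  (exists2 a, a <= n & e w (x a)) -> (exists2 b, b <= n & e (x b) w) ->
  (exists2 a, a <= n & e z (x a)) -> (exists2 b, b <= n & e (x b) z) ->
  adjacent e w z.
Proof.
move=> hw hz hwz /ex_max_bounded[A [hA hwA hAm]] /ex_min_bounded[B [hB hBw hBm]].
move=> /ex_max_bounded[A' [hA' hzA' hA'm]] /ex_min_bounded[B' [hB' hB'z hB'm]].
case: (boolP (adjacent e w z)) => // hna; exfalso.
case: (leqP A A') => hAA'.
  exact: (both_directions_absurd hw hz hwz hna hA hwA hAm hB hBw hBm
                                 hA' hzA' hA'm hB' hB'z hB'm hAA').
have hzw : z != w by rewrite eq_sym.
have hna' : ~~ adjacent e z w by rewrite adjacentC.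
exact: (both_directions_absurd hz hw hzw hna' hA' hzA' hA'm hB' hB'z hB'm
                               hA hwA hAm hB hBw hBm (ltnW hAA')).
Qed.

Section AlongPath.

Variables (y0 : T) (Yt : seq T).
Hypothesis hY : spath e y0 Yt.
Local Notation Y i := (nth y0 (y0 :: Yt) i).

Lemma adj_over_segment c j : j + (n - 3) <= size Yt ->
  c \notin Y j :: subpath y0 Yt j (j + (n - 3)) -> e c (Y j) -> adjacent e c (Y (j + (n - 3))).
Proof.
move=> hj hc hcj; rewrite -(last_subpath y0 (leq_addr _ _) hj).
by apply: (adj_path_end G (spath_subpath hY (leq_addr _ _) hj)) _ hcj hc; rewrite size_subpath // addKn.
Qed.

Lemma out_along c N : N <= size Yt ->
  (forall i, i <= n - 2 -> e c (Y i)) -> (forall i, i <= N -> Y i != c) ->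
  (forall i, n - 2 < i <= N -> ~~ e (Y i) c) -> forall i, i <= N -> e c (Y i).
Proof.
move=> hN hbase hneq hnin; elim/ltn_ind => i IH hi.
case: (leqP i (n - 2)) => hi2; first exact: hbase.
have hn := geo_long G; have [j hij] : exists j, i = j + (n - 3) by exists (i - (n - 3)); nat_lia.
rewrite hij; apply: adjacent_orient; last by apply: hnin; nat_lia.
apply: adj_over_segment; first nat_lia.
  by apply: notin_subpath => [||t ht]; [nat_lia | rewrite -hij (leq_trans hi hN) | apply: hneq; nat_lia].
by apply: IH; nat_lia.
Qed.

(* w and z dominate the part of Y in P; (n-2)-quasi-transitivity pushes this forward
   n - 3 steps at a time until z dominates the vertex n - 3 steps before w. *)
Lemma no_in_pair_absurd w z :
  n - 2 < size Yt -> Y (size Yt) = w ->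
  (forall i, i <= n - 2 -> Y i \in trace n x) ->
  (forall i, i.+2 <= size Yt -> ~~ e (Y i) w) -> (forall i, i <= size Yt -> Y i != z) ->
  (forall y, y \in trace n x -> e w y) -> (forall y, y \in trace n x -> e z y) ->
  w != z -> ~~ adjacent e w z -> False.
Proof.
move=> hM hYw htrace hnoin hzY hwP hzP hwz hna; have hn := geo_long G.
have hwY i : i < size Yt -> Y i != w.
  move=> hi; rewrite -hYw; apply/eqP => /(spath_nth_inj hY (ltnW hi) (leqnn _)) hE.
  by rewrite hE ltnn in hi.
have hwout := out_along (c := w) (N := size Yt - 2) (leq_subr _ _)
  (fun i hi => hwP _ (htrace i hi)) (fun i hi => hwY i ltac:(nat_lia))
  (fun i hi => hnoin i ltac:(nat_lia)).
have hzout : forall i, i <= size Yt - 1 -> e z (Y i).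
  apply: out_along (leq_subr _ _) (fun i hi => hzP _ (htrace i hi)) _ _.
    by move=> i hi; apply: hzY; nat_lia.
  move=> i hi; apply/negP => hiz; move/negP: hna; apply.
  have [j hij] : exists j, i = j + (n - 4) by exists (i - (n - 4)); nat_lia.
  have hj : j + (n - 4) <= size Yt by nat_lia.
  rewrite hij -(last_subpath y0 (leq_addr _ _) hj) in hiz.
  apply: (adj_across_path G (spath_subpath hY (leq_addr _ _) hj)) _ (hwout j _) hiz _ _ hwz.
  - by rewrite size_subpath // addKn.
  - nat_lia.
  - by apply: (notin_subpath (leq_addr _ _) hj) => t ht; apply: hwY; nat_lia.
  - by apply: (notin_subpath (leq_addr _ _) hj) => t ht; apply: hzY; nat_lia.
move/negP: hna; apply; rewrite adjacentC -hYw.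
have [j hj] : exists j, size Yt = j + (n - 3) by exists (size Yt - (n - 3)); nat_lia.
rewrite hj; apply: adj_over_segment; first nat_lia.
  by apply: (notin_subpath (leq_addr _ _) (eq_leq (esym hj))) => t ht; apply: hzY; nat_lia.
by apply: hzout; nat_lia.
Qed.

End AlongPath.

Lemma adj_of_no_in_closer w z a q :
  outside w -> outside z -> w != z ->
  (forall i, i <= n -> ~~ e (x i) w) -> (forall i, i <= n -> ~~ e (x i) z) ->
  trace_geodesic e n x a q -> last a q = w -> (forall m, trace_path e n x z m -> size q <= m) ->
  adjacent e w z.
Proof.
move=> hw hz hwz hinw hinz hg hlw hzfar; have [hq ha _] := hg; have hn := geo_long G.
case: (boolP (adjacent e w z)) => // hna; exfalso.
have [b hb hab] := traceP ha.
have [a0 [l0 [hl0 hl0b hs0]]] := jpath_ending (n := n) (L := n - 2) ltac:(nat_lia) hb (leq_subr _ _).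
have hlast0 : last (x a0) (map x l0) = a by rewrite last_map hl0b hab.
have hs0' : size (map x l0) = n - 2 by rewrite size_map.
have hq0 : 0 < size q.
  by case: q hq hg hlw {hzfar} => // _ _ /= hlw; move: hw; rewrite -hlw ha.
have hYchain i : n - 2 <= i <= n - 2 + size q ->
    nth (x a0) (x a0 :: map x l0 ++ q) i = nth a (a :: q) (i - (n - 2)).
  by rewrite -{1 2 3}hs0'; apply: nth_cons_cat.
have hYtrace i : i <= n - 2 -> nth (x a0) (x a0 :: map x l0 ++ q) i \in trace n x.
  move=> hi; rewrite -cat_cons nth_cat /= hs0' ltnS hi.
  by apply: (jpath_trace hl0); apply: mem_nth; rewrite /= hs0' ltnS.
have hsize : size (map x l0 ++ q) = n - 2 + size q by rewrite size_cat hs0'.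
apply: (no_in_pair_absurd (y0 := x a0) (Yt := map x l0 ++ q) _ _ _ hYtrace _ _ _ _ hwz hna).
- apply: spath_cat (spath_jpath G hl0) _ _; first by rewrite hlast0.
  move=> u /(jpath_trace hl0) hu /(trace_geodesic_outside hg).
  by rewrite hu.
- by rewrite hsize; nat_lia.
- by rewrite -(last_nth (x a0)) last_cat hlast0.
- move=> i; rewrite hsize => hi; case: (leqP i (n - 2)) => hi2.
    by have [j hj ->] := traceP (hYtrace i hi2); apply: hinw.
  rewrite hYchain; last nat_lia.
  by rewrite -hlw; apply: (trace_geodesic_no_shortcut hg); nat_lia.
- move=> i; rewrite hsize => hi; case: (leqP i (n - 2)) => hi2.
    by apply: contraNneq hz => <-; apply: hYtrace.
  rewrite hYchain; last nat_lia.
  case: (ltnP (i - (n - 2)) (size q)) => ht.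
    apply/eqP => hzt; have := hzfar (i - (n - 2)).
    by rewrite -hzt; move/(_ (trace_path_prefix hq ha (ltnW ht))); nat_lia.
  by rewrite (_ : i - (n - 2) = size q) -?(last_nth a) ?hlw //; nat_lia.
- by move=> y /traceP [j hj ->]; apply: (out_to_all G hw hinw).
- by move=> y /traceP [j hj ->]; apply: (out_to_all G hz hinz).
Qed.

Lemma adj_of_no_in_both w z : outside w -> outside z -> w != z ->
  (forall i, i <= n -> ~~ e (x i) w) -> (forall i, i <= n -> ~~ e (x i) z) ->
  adjacent e w z.
Proof.
move=> hw hz hwz hinw hinz.
have [a [q [hg hl]]] := trace_geodesic_exists G w.
have [a' [q' [hg' hl']]] := trace_geodesic_exists G z.
have [_ _ hmin] := hg; have [_ _ hmin'] := hg'.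
case: (leqP (size q) (size q')) => hqq'.
  apply: adj_of_no_in_closer hg hl _ => // m; rewrite -hl' => /hmin'.
  exact: leq_trans.
rewrite adjacentC; apply: adj_of_no_in_closer hg' hl' _ => //; first by rewrite eq_sym.
by move=> m; rewrite -hl => /hmin; apply: leq_trans; apply: ltnW.
Qed.

End OutsidePairs.

Section OutsideSemicomplete.

Variables (T : finType) (e : rel T) (n : nat) (x : nat -> T).
Hypothesis G : geodesic_setting e n x.
Local Notation outside w := (w \notin trace n x).
Let G' := geodesic_setting_rev G.

Lemma adj_of_no_out w z b : outside w -> outside z -> w != z ->
  (forall i, i <= n -> ~~ e w (x i)) -> b <= n -> e z (x b) -> adjacent e w z.
Proof.
move=> hw hz hwz hout hb hzb.
have := adj_of_no_in G' (w := w) (z := z) (b := n - b).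
rewrite !trace_rev adjacent_rev /= subKn //; apply => //; last exact: leq_subr.
by move=> i hi; apply: hout; apply: leq_subr.
Qed.

Lemma adj_of_no_out_both w z : outside w -> outside z -> w != z ->
  (forall i, i <= n -> ~~ e w (x i)) -> (forall i, i <= n -> ~~ e z (x i)) ->
  adjacent e w z.
Proof.
move=> hw hz hwz houtw houtz.
have := adj_of_no_in_both G' (w := w) (z := z).
rewrite !trace_rev adjacent_rev; apply => // i hi /=; [apply: houtw | apply: houtz]; exact: leq_subr.
Qed.

Lemma outside_adjacent w z : outside w -> outside z -> w != z -> adjacent e w z.
Proof.
move=> hw hz hwz; have hzw : z != w by rewrite eq_sym.
have [[b hb hbw] | noin_w] := ex_bounded_or_none (fun i => e (x i) w) n; last first.
  have [[b hb hbz] | noin_z] := ex_bounded_or_none (fun i => e (x i) z) n.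
    exact: (adj_of_no_in G hw hz hwz noin_w hb hbz).
  exact: (adj_of_no_in_both G hw hz hwz noin_w noin_z).
have [[c hc hcz] | noin_z] := ex_bounded_or_none (fun i => e (x i) z) n; last first.
  by rewrite adjacentC; exact: (adj_of_no_in G hz hw hzw noin_z hb hbw).
have [[a ha hwa] | noout_w] := ex_bounded_or_none (fun i => e w (x i)) n;
have [[a' ha' hza'] | noout_z] := ex_bounded_or_none (fun i => e z (x i)) n.
- by apply: (adj_of_two_way G hw hz hwz); [exists a | exists b | exists a' | exists c].
- by rewrite adjacentC; apply: adj_of_no_out hz hw hzw noout_z ha hwa.
- exact: adj_of_no_out hw hz hwz noout_w ha' hza'.
- exact: adj_of_no_out_both hw hz hwz noout_w noout_z.
Qed.

End OutsideSemicomplete.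

Lemma trace_nth (T : eqType) (u : T) p : trace (size p) (nth u (u :: p)) = u :: p.
Proof. by have := mkseq_nth u (u :: p). Qed.

Lemma shortest_path_size (T : finType) (e : rel T) u v p m :
  dist_is e u v m -> shortest_path e u v p -> size p = m.
Proof.
case=> [[q [hq <-]] hdist] [hp hmin].
by apply/eqP; rewrite eqn_leq hmin // hdist.
Qed.

Lemma geodesic_setting_of_shortest (T : finType) (e : rel T) u v p :
  7 <= size p -> shortest_path e u v p -> semicomplete_on e (fun y => y \in u :: p) ->
  k_quasi_transitive e (size p - 2) -> strong e ->
  geodesic_setting e (size p) (nth u (u :: p)).
Proof.
move=> hn [/andP[hp /eqP hlast] hmin] hsc hkqt hstrong.
have hmem i : i <= size p -> nth u (u :: p) i \in u :: p by move=> hi; rewrite mem_nth.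
have hinj i j : i <= size p -> j <= size p -> nth u (u :: p) i = nth u (u :: p) j -> i = j.
  exact: spath_nth_inj hp.
split => //.
- by move=> i hi; apply: spath_step.
- move=> i j hi hj hij; apply: hsc; rewrite ?hmem //.
  by apply: contra hij => /eqP /(hinj _ _ hi hj) ->.
- move=> q hq hl; apply: hmin; rewrite /xy_path /dpath.
  by rewrite [path _ _ _ && _]hq /= hl -(last_nth u) hlast.
- by move=> a b; have [q /andP[hq /eqP hl]] := hstrong a b; exists q.
Qed.

Theorem lemma2p13 (T : finType) (e : rel T) (k : nat)
  (Hirr : irreflexive e)
  (Hodd : odd k) (Hk : 5 <= k)
  (Hstrong : strong e)
  (Hkqt : k_quasi_transitive e k)
  (Hdiam : diam_ge e (k + 2))
  (u v : T) (Huv : dist_is e u v (k + 2))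
  (p : seq T) (HP : shortest_path e u v p)
  (Hsc : semicomplete_on e (fun x => x \in u :: p)) :
  semicomplete_on e (fun x => x \notin u :: p).
Proof.
have hsize := shortest_path_size Huv HP.
have G : geodesic_setting e (size p) (nth u (u :: p)).
  apply: geodesic_setting_of_shortest HP Hsc _ Hstrong; first by rewrite hsize; lia.
  by rewrite hsize addnK.
by move=> w z hw hz hwz; apply: (outside_adjacent G); rewrite ?trace_nth.
Qed.
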